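(* Let $n\ge1$ and $d\in\mathbf D$. If $\ell(d)\ne\ell(r_n(d))$, then $d=j/2^n$ for some integer $j$. In particular, for every $r\in\mathrm{Rot}$ there are only finitely many $d\in\mathbf D$ with $\ell(d)\ne\ell(r(d))$.
   Context: $\mathbf D=\{a/2^n:n\ge1,0\le a\le2^n-1\}\subset[0,1)\cong\mathbf R/\mathbf Z$. A standard dyadic interval (s.d.i.) is $(a/2^k,(a+1)/2^k)$ with $a,k\in\mathbf N$, $(a+1)/2^k\le1$. $\ell:\mathbf D\to\mathbf R$ is $\ell(d)=-\log_2(d'-d)$ where $(d,d')$ is the largest s.d.i. with left endpoint $d$ (e.g. $\ell(0)=0$, $\ell(1/2)=1$, $\ell(1/4)=\ell(3/4)=2$). $r_n$ is the rotation $x\mapsto x+2^{-n}\pmod 1$ of the torus (an element of Thompson's group $T$), and $\mathrm{Rot}=\bigcup_{n\ge1}\langle r_n\rangle$ is the group of rotations by dyadic angles $k/2^n$. *)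

From HB Require Import structures.
From mathcomp Require Import all_boot all_order all_algebra.
From mathcomp Require Import boolp.
Set Implicit Arguments. Unset Strict Implicit. Unset Printing Implicit Defensive.
Import Order.TTheory GRing.Theory Num.Theory.
Local Open Scope ring_scope.

(* The torus R/Z is represented by representatives in [0,1); points of the
   torus that we need are rationals. *)

Definition inD (d : rat) : Prop :=
  exists n : nat, (1 <= n)%N /\
    exists a : nat, (a <= 2 ^ n - 1)%N /\ d = a%:R / (2 ^ n)%:R.

(* [sdi_left d k] : there is a standard dyadic interval (a/2^k, (a+1)/2^k),
   a natural, (a+1)/2^k <= 1 (i.e. a < 2^k), whose left endpoint is d. *)
Definition sdi_left (d : rat) (k : nat) : bool :=
  [exists a : 'I_(2 ^ k), d == (nat_of_ord a)%:R / (2 ^ k)%:R].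

(* ell d = -log2 (length of the largest s.d.i. with left endpoint d)
   = the least k such that an s.d.i. of length 2^-k has left endpoint d.
   (Default value 0 if no such interval exists; never used on D.) *)
Definition ell (d : rat) : nat :=
  match pselect (exists k, sdi_left d k) with
  | left h => ex_minn h
  | right _ => 0%N
  end.

Definition dyrot (n : nat) (d : rat) : rat :=
  let x := d + 1 / (2 ^ n)%:R in if x < 1 then x else x - 1.

From HB Require Import structures.
From mathcomp Require Import all_boot all_order all_algebra.
From mathcomp Require Import boolp ring lra.
Set Implicit Arguments. Unset Strict Implicit. Unset Printing Implicit Defensive.
Import Order.TTheory GRing.Theory Num.Theory.
Local Open Scope ring_scope.

(* For d in [0,1), ell d is the least k with d in 2^-k Z.  The rotation r_n
   adds an element of 2^-n Z, so it preserves membership in 2^-k Z for k >= n;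
   and if d is not in 2^-n Z, then neither d nor r_n d lies in any 2^-k Z with
   k < n.  Hence r_n (and each of its powers) preserves ell outside the 2^n
   points of 2^-n Z in [0,1). *)

Definition dyadic (k : nat) (d : rat) : bool := d * (2 ^ k)%:R \is a Num.int.

Lemma pow2_gt0 k : 0 < (2 ^ k)%:R :> rat.
Proof. by rewrite ltr0n expn_gt0. Qed.

Lemma pow2_neq0 k : (2 ^ k)%:R != 0 :> rat.
Proof. by rewrite gt_eqF ?pow2_gt0. Qed.

Lemma dyadicP k d : reflect (exists j : int, d = j%:~R / (2 ^ k)%:R) (dyadic k d).
Proof.
rewrite /dyadic; apply: (iffP intrP) => -[j hj]; exists j.
  by rewrite -hj mulfK ?pow2_neq0.
by rewrite hj mulfVK ?pow2_neq0.
Qed.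

Lemma dyadicW k k' d : (k <= k')%N -> dyadic k d -> dyadic k' d.
Proof.
move=> le_kk'; rewrite /dyadic -(subnK le_kk') expnD natrM mulrCA => hd.
by rewrite rpredM ?natr_int.
Qed.

Lemma dyadicDr k x d : dyadic k x -> dyadic k (d + x) = dyadic k d.
Proof. by rewrite /dyadic mulrDl => /rpredDr. Qed.

Lemma sdi_leftE d k : 0 <= d < 1 -> sdi_left d k = dyadic k d.
Proof.
move=> /andP[d_ge0 d_lt1]; apply/existsP/idP => [[a /eqP ->]|].
  by apply/dyadicP; exists (Posz a).
rewrite /dyadic intrEge0 ?mulr_ge0 ?ler0n // => /natrP[a ha].
have a_lt : (a < 2 ^ k)%N.
  by rewrite -(ltr_nat rat) -ha gtr_pMl ?pow2_gt0.
by exists (Ordinal a_lt); rewrite /= -ha mulfK ?pow2_neq0.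
Qed.

Lemma dyrot_range n d : 0 <= d < 1 -> 0 <= dyrot n d < 1.
Proof.
move=> /andP[d_ge0 d_lt1]; rewrite /dyrot.
have step_gt0 : 0 < 1 / (2 ^ n)%:R :> rat by rewrite divr_gt0 ?pow2_gt0.
have step_le1 : 1 / (2 ^ n)%:R <= 1 :> rat.
  by rewrite ler_pdivrMr ?pow2_gt0 // mul1r ler1n expn_gt0.
by case: ifP => ?; apply/andP; split; lra.
Qed.

Lemma dyadic_dyrot_shift n d : dyadic n (dyrot n d - d).
Proof.
apply/dyadicP; rewrite /dyrot; case: ifP => _.
  by exists 1; rewrite addrC addKr.
exists (1 - (2 ^ n)%:Z); rewrite rmorphB /=.
by field; rewrite pow2_neq0.
Qed.

Lemma dyadic_dyrot n k d : ~~ dyadic n d -> dyadic k (dyrot n d) = dyadic k d.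
Proof.
move=> nd; have shift_eq l : (n <= l)%N -> dyadic l (dyrot n d) = dyadic l d.
  move=> le_nl; rewrite -[dyrot n d](addrNK d) addrC.
  by rewrite dyadicDr // (dyadicW le_nl) ?dyadic_dyrot_shift.
case: (leqP n k) => [|lt_kn]; first exact: shift_eq.
have not_k y : ~~ dyadic n y -> ~~ dyadic k y by apply/contraNN/dyadicW/ltnW.
have ndr : ~~ dyadic n (dyrot n d) by rewrite shift_eq.
by rewrite (negbTE (not_k _ nd)) (negbTE (not_k _ ndr)).
Qed.

Lemma dyadic_iter_dyrot n m k d :
  ~~ dyadic n d -> dyadic k (iter m (dyrot n) d) = dyadic k d.
Proof.
move=> nd; elim: m k => // m IHm k.
by rewrite iterS dyadic_dyrot ?IHm.
Qed.

Lemma iter_dyrot_range n m d : 0 <= d < 1 -> 0 <= iter m (dyrot n) d < 1.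
Proof. by move=> hd; elim: m => // m IHm; rewrite iterS dyrot_range. Qed.

Lemma eq_ell d e : sdi_left d =1 sdi_left e -> ell d = ell e.
Proof.
move=> eq_de; rewrite /ell; case: pselect => [p|np]; case: pselect => [q|nq].
- exact: eq_ex_minn.
- by case: nq; case: p => k hk; exists k; rewrite -eq_de.
- by case: np; case: q => k hk; exists k; rewrite eq_de.
- by [].
Qed.

Lemma ell_iter_dyrot n m d :
  0 <= d < 1 -> ~~ dyadic n d -> ell (iter m (dyrot n) d) = ell d.
Proof.
move=> hd nd; apply: eq_ell => k.
by rewrite !sdi_leftE ?iter_dyrot_range ?dyadic_iter_dyrot.
Qed.

Lemma dyadic_of_ell_iter_dyrot n m d :
  0 <= d < 1 -> ell d <> ell (iter m (dyrot n) d) -> dyadic n d.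
Proof.
move=> hd hne; apply/negPn/negP => nd.
by apply: hne; rewrite ell_iter_dyrot.
Qed.

Lemma inD_range d : inD d -> 0 <= d < 1.
Proof.
case=> k [_ [a [le_a ->]]]; rewrite divr_ge0 //=.
rewrite ltr_pdivrMr ?pow2_gt0 // mul1r ltr_nat.
by apply: leq_ltn_trans le_a _; rewrite ltn_subrL expn_gt0.
Qed.

Theorem proposition3p18 :
  (forall (n : nat) (d : rat), (1 <= n)%N -> inD d ->
     ell d <> ell (dyrot n d) ->
     exists j : int, d = j%:~R / (2 ^ n)%:R)
  /\
  (* every element of Rot = \bigcup_n <r_n> is r_n^m for some n >= 1, m
     (r_n has finite order 2^n, so nonnegative powers exhaust <r_n>) *)
  (forall (n m : nat), (1 <= n)%N ->
     exists s : seq rat, forall d : rat, inD d ->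
       ell d <> ell (iter m (dyrot n) d) -> d \in s).
Proof.
split=> [n d _ /inD_range hd hne | n m _].
  by apply/dyadicP; apply: (@dyadic_of_ell_iter_dyrot n 1).
exists [seq j%:R / (2 ^ n)%:R | j <- iota 0 (2 ^ n)] => d /inD_range hd hne.
have := dyadic_of_ell_iter_dyrot hd hne.
rewrite -sdi_leftE // => /existsP[a /eqP ->].
by apply: map_f; rewrite mem_iota add0n ltn_ord.
Qed.
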